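(* Let $F\in Sh^{s,0}_{\Lambda_L}(X)\cap Mod(X)$ be given by data $(V,\rho,W_s,\rho_s,T_s)_{1\le s\le r}$, and let $V_0\subset V$ be as in the context. Set $\rho_0=\rho|_{V_0}$, $W_{0s}=W_s\cap V_0$ (viewing $W_s\subset V$ via $T_s$), $\rho_{0s}=\rho_s|_{W_{0s}}$ and $T_{0s}=T_s|_{W_{0s}}:W_{0s}\to V_0$. Then these are well-defined data of the same type: $V_0$ is $\pi_L$-invariant, $W_{0s}$ is invariant under the monodromy $\rho_s$, the meridian of $K_s$ acts as the identity on $T_{0s}(W_{0s})$, and $\rho_0(\ell_s)\circ T_{0s}=T_{0s}\circ\rho_{0s}(K_s)$. Hence they define a sheaf $F_0$ (the once stabilized subsheaf), and $F_0$ is a subsheaf of $F$.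
   Context: $X=\mathbb{R}^3$ or $S^3$, $k$ a field, $L=K_1\sqcup\dots\sqcup K_r\subset X$ an oriented link with framing $L'=\ell_1\sqcup\dots\sqcup\ell_r$, $\pi_L=\pi_1(X\setminus L)$. $Sh^{s,0}_{\Lambda_L}(X)\cap Mod(X)$: sheaves of $k$-vector spaces on $X$ with micro-support at infinity in the unit conormal $\Lambda_L$, microlocally simple along $\Lambda_L$ with microlocal Morse cone in degree $0$. Such a sheaf is equivalent to data: a representation $\rho:\pi_L\to GL(V)$ (the local system $F|_{X\setminus L}$); for each $s$ a representation $\rho_s:\mathbb{Z}=\pi_1(K_s)\to GL(W_s)$ (the local system $F|_{K_s}$); and a linear map $T_s:W_s\to V$ (restriction from a stalk on $K_s$ to a nearby stalk in the complement), injective with one-dimensional cokernel, such that (a) $\rho(\ell_s)\circ T_s=T_s\circ\rho_s(K_s)$, where $\ell_s$ is the longitude (framing) loop and $K_s$ the generator, and (b) the meridian $m_s$ of $K_s$ acts as the identity on $\mathrm{im}\,T_s$; conversely such data (satisfying (a),(b)) define a sheaf with micro-support in $\Lambda_L$. $V_0:=\sum_{t}\mathrm{im}(\mathrm{id}_V-\rho(m_t))$, the sum over a generating set of $\pi_L$ consisting of meridians (independent of the choice). *)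

From HB Require Import structures.
From mathcomp Require Import all_boot all_order all_algebra.
Set Implicit Arguments. Unset Strict Implicit. Unset Printing Implicit Defensive.
Import Order.TTheory GRing.Theory Num.Theory.
Local Open Scope ring_scope.

(* The group pi_L is modelled by an abstract (possibly infinite) group [G]. *)

Definition generates (G : groupType) (n : nat) (gens : 'I_n -> G) : Prop :=
  forall P : G -> Prop,
    P 1%g ->
    (forall x y, P x -> P y -> P (x * y)%g) ->
    (forall x, P x -> P (x^-1)%g) ->
    (forall i, P (gens i)) ->
    forall g, P g.

(* [rho] is a representation G -> GL(V) (invertibility follows from the
   group law). *)
Definition is_rep (k : fieldType) (G : groupType) (V : lmodType k)
    (rho : G -> {linear V -> V}) : Prop :=
  (forall v, rho 1%g v = v) /\
  (forall g h v, rho (g * h)%g v = rho g (rho h v)).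

Definition is_int_rep (k : fieldType) (W : lmodType k)
    (rhos : int -> {linear W -> W}) : Prop :=
  (forall w, rhos 0%Z w = w) /\
  (forall a b w, rhos (a + b)%R w = rhos a (rhos b w)).

Definition inj_codim1 (k : fieldType) (W V : lmodType k)
    (T : {linear W -> V}) : Prop :=
  injective T /\
  exists v0 : V, (forall w, T w <> v0) /\
    (forall v, exists (w : W) (a : k), v = T w + a *: v0).

(* V_0 = sum over the meridian generators mer_t of im(id_V - rho(mer_t)). *)
Definition inV0 (k : fieldType) (G : groupType) (V : lmodType k)
    (rho : G -> {linear V -> V}) (n : nat) (mer : 'I_n -> G) (v : V) : Prop :=
  exists c : 'I_n -> V, v = \sum_(t < n) (c t - rho (mer t) (c t)).

From HB Require Import structures.
From mathcomp Require Import all_boot all_order all_algebra.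
Import Order.TTheory GRing.Theory Num.Theory.
Local Open Scope ring_scope.

(* The set of [g] with [v - rho g v \in V_0] for all [v] is a subgroup of
   [pi_L] (by the cocycle identity v - rho (x y) v = (v - rho y v) +
   (w - rho x w) with w = rho y v) containing the generators, hence all of
   [pi_L]; so [rho g v = v - (v - rho g v)] stays in [V_0].  The monodromy
   invariance of [W_0s] then follows from [rho_s(K_s^a) = rho(l_s^a)] on
   [W_s], and the remaining conditions are inherited from [F]. *)

Section RepresentationTheory.
Set Implicit Arguments. Unset Strict Implicit.
Variables (k : fieldType) (G : groupType) (V : lmodType k)
  (rho : G -> {linear V -> V}).
Hypothesis rho_rep : is_rep rho.

Lemma rep1 v : rho 1%g v = v.
Proof. by case: rho_rep. Qed.

Lemma repM g h v : rho (g * h)%g v = rho g (rho h v).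
Proof. by case: rho_rep. Qed.

Lemma repVK g v : rho g^-1%g (rho g v) = v.
Proof. by rewrite -repM mulVg rep1. Qed.

Lemma repKV g v : rho g (rho g^-1%g v) = v.
Proof. by rewrite -repM mulgV rep1. Qed.

Variables (W : lmodType k) (rhoW : int -> {linear W -> W}) (T : W -> V).
Hypothesis rhoW_rep : is_int_rep rhoW.

Lemma int_repNK w : rhoW 1 (rhoW (-1) w) = w.
Proof. by case: rhoW_rep => rhoW0 rhoWD; rewrite -rhoWD subrr rhoW0. Qed.

Lemma int_rep_stable (P : W -> Prop) :
    (forall w, P w -> P (rhoW 1 w)) -> (forall w, P w -> P (rhoW (-1) w)) ->
  forall a w, P w -> P (rhoW a w).
Proof.
have [rhoW0 rhoWD] := rhoW_rep; move=> P1 PN1.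
elim/int_rec => [|a IHa|a IHa] w Pw; first by rewrite rhoW0.
  by rewrite -addn1 PoszD addrC rhoWD; apply/P1/IHa.
by rewrite -addn1 PoszD opprD addrC rhoWD; apply/PN1/IHa.
Qed.

Lemma intertwineV g :
    (forall w, rho g (T w) = T (rhoW 1 w)) ->
  forall w, rho g^-1%g (T w) = T (rhoW (-1) w).
Proof. by move=> Tg w; rewrite -[in LHS](int_repNK w) -Tg repVK. Qed.

End RepresentationTheory.

Section StabilizedSubspace.
Set Implicit Arguments. Unset Strict Implicit.
Variables (k : fieldType) (G : groupType) (V : lmodType k)
  (rho : G -> {linear V -> V}) (n : nat) (mer : 'I_n -> G).

Local Notation inV0 := (inV0 rho mer).

Lemma inV00 : inV0 0.
Proof. by exists (fun _ => 0); rewrite big1 // => t _; rewrite linear0 subr0. Qed.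

Lemma inV0D u v : inV0 u -> inV0 v -> inV0 (u + v).
Proof.
move=> [c ->] [d ->]; exists (fun t => c t + d t).
by rewrite -big_split; apply: eq_bigr => t _; rewrite linearD opprD addrACA.
Qed.

Lemma inV0N u : inV0 u -> inV0 (- u).
Proof.
move=> [c ->]; exists (fun t => - c t).
by rewrite -sumrN; apply: eq_bigr => t _; rewrite linearN opprB opprK addrC.
Qed.

Lemma inV0_sub_gen i v : inV0 (v - rho (mer i) v).
Proof.
exists (fun t => if t == i then v else 0).
rewrite (bigD1 i) //= eqxx big1 ?addr0 // => t /negbTE ->.
by rewrite linear0 subr0.
Qed.

Hypotheses (rho_rep : is_rep rho) (mer_gen : generates mer).

Lemma inV0_sub_rep g v : inV0 (v - rho g v).
Proof.
elim/mer_gen: g v => [|x y Px Py|x Px|i] v.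
- by rewrite rep1 // subrr; apply: inV00.
- have -> : v - rho (x * y)%g v = (v - rho y v) + (rho y v - rho x (rho y v)).
    by rewrite repM // addrA subrK.
  exact: inV0D.
- have -> : v - rho x^-1%g v = - (rho x^-1%g v - rho x (rho x^-1%g v)).
    by rewrite repKV // opprB.
  exact: inV0N.
- exact: inV0_sub_gen.
Qed.

Lemma inV0_rep g v : inV0 v -> inV0 (rho g v).
Proof.
move=> V0v; have -> : rho g v = v + - (v - rho g v) by rewrite opprB addrC subrK.
by apply: inV0D => //; apply/inV0N/inV0_sub_rep.
Qed.

Lemma inV0_preimage_monodromy (W : lmodType k) (rhoW : int -> {linear W -> W})
    (T : W -> V) (g : G) :
    is_int_rep rhoW -> (forall w, rho g (T w) = T (rhoW 1 w)) ->
  forall a w, inV0 (T w) -> inV0 (T (rhoW a w)).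
Proof.
move=> rhoW_rep Tg; apply: int_rep_stable => // w V0Tw.
  by rewrite -Tg; apply: inV0_rep.
by rewrite -(intertwineV rho_rep rhoW_rep Tg); apply: inV0_rep.
Qed.

End StabilizedSubspace.

Theorem proposition3p12
  (k : fieldType) (G : groupType) (r : nat)
  (* meridian m_s and longitude (framing) l_s of K_s, as elements of pi_L *)
  (m l : 'I_r -> G)
  (* a generating set of pi_L consisting of meridians *)
  (n : nat) (mer : 'I_n -> G)
  (Hgen : generates mer)
  (Hmer : forall t, exists (s : 'I_r) (h : G), mer t = (h^-1 * m s * h)%g)
  (* the data (V, rho, W_s, rho_s, T_s) of F *)
  (V : lmodType k) (rho : G -> {linear V -> V})
  (W : 'I_r -> lmodType k) (rhos : forall s, int -> {linear W s -> W s})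
  (T : forall s, {linear W s -> V})
  (Hrho : is_rep rho)
  (Hrhos : forall s, is_int_rep (rhos s))
  (HT : forall s, inj_codim1 (T s))
  (Ha : forall s w, rho (l s) (T s w) = T s (rhos s 1%Z w))
  (Hb : forall s w, rho (m s) (T s w) = T s w) :
  (* V_0 is pi_L-invariant *)
  (forall g v, inV0 rho mer v -> inV0 rho mer (rho g v)) /\
  (* W_0s = T_s^{-1}(V_0) is invariant under the monodromy rho_s *)
  (forall s (a : int) w, inV0 rho mer (T s w) -> inV0 rho mer (T s (rhos s a w))) /\
  (* T_0s : W_0s -> V_0 is injective *)
  (forall s w1 w2, inV0 rho mer (T s w1) -> inV0 rho mer (T s w2) ->
       T s w1 = T s w2 -> w1 = w2) /\
  (* the meridian of K_s acts as the identity on T_0s(W_0s) *)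
  (forall s w, inV0 rho mer (T s w) -> rho (m s) (T s w) = T s w) /\
  (* rho_0(l_s) o T_0s = T_0s o rho_0s(K_s) *)
  (forall s w, inV0 rho mer (T s w) -> rho (l s) (T s w) = T s (rhos s 1%Z w)).
Proof.
split; first by move=> g v; apply: inV0_rep.
split; first by move=> s; apply: (inV0_preimage_monodromy Hrho Hgen (Hrhos s) (Ha s)).
split; first by move=> s w1 w2 _ _; apply: (proj1 (HT s)).
by split=> s w _; [apply: Hb | apply: Ha].
Qed.
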